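(* Let $\mathbf a=(a_0,a_1,\ldots)$ be an integer sequence, and let $\mathbf m$ and $\mathbf b$ be its double-ox middle and transformed sequences. Then the exponential generating functions $\mathcal A(x)=\sum a_nx^n/n!$, $\mathcal M(x)=\sum m_nx^n/n!$, $\mathcal B(x)=\sum b_nx^n/n!$ satisfy, as formal power series, $$\mathcal M(x)=\frac{1}{\cos x-\sin x}\,\mathcal A(x),\qquad \mathcal B(x)=\frac{\cos x+\sin x}{\cos x-\sin x}\,\mathcal A(x).$$
   Context: Double-ox transform: given $\mathbf a$, define two triangular arrays $L_{n,k}$, $R_{n,k}$ ($0\le k\le n$) as follows. For $n\ge k\ge0$: $L_{n+1,k+1}=L_{n+1,k}+L_{n,n-k}$ and $R_{n+1,k+1}=R_{n+1,k}+R_{n,n-k}$. The first entries of the rows are: $L_{2i,0}=a_{2i}$, $R_{2i+1,0}=a_{2i+1}$, $R_{2i,0}=L_{2i,2i}$, $L_{2i+1,0}=R_{2i+1,2i+1}$ for $i\ge0$ (so rows are computed in the order $L$ row $0$, $R$ row $0$, $R$ row $1$, $L$ row $1$, $L$ row $2$, $R$ row $2$, \dots). Then the middle sequence is $m_{2i}=L_{2i,2i}$, $m_{2i+1}=R_{2i+1,2i+1}$, and the transformed sequence is $b_{2i}=R_{2i,2i}$, $b_{2i+1}=L_{2i+1,2i+1}$. (For example, $\mathbf a=(1,1,1,\ldots)$ gives $\mathbf b=(1,3,9,35,177,\ldots)$.) *)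

From mathcomp Require Import all_boot all_order all_algebra.
Set Implicit Arguments. Unset Strict Implicit. Unset Printing Implicit Defensive.
Import Order.TTheory GRing.Theory Num.Theory.
Local Open Scope ring_scope.

(* Given the first entry [f] of row n+1 and row n [prev] (entries
   X_{n,0..n}), compute row n+1 via X_{n+1,k+1} = X_{n+1,k} + X_{n,n-k}. *)
Definition next_row (f : int) (prev : seq int) : seq int :=
  f :: scanl +%R f (rev prev).

(* ox_rows a n = (row n of L, row n of R), computed in the order
   L0, R0, R1, L1, L2, R2, ... *)
Fixpoint ox_rows (a : nat -> int) (n : nat) : seq int * seq int :=
  match n with
  | 0%N => ([:: a 0%N], [:: a 0%N])
  | n'.+1 =>
      let (l, r) := ox_rows a n' in
      if odd n'.+1 then
        let r' := next_row (a n'.+1) r in (next_row (last 0 r') l, r')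
      else
        let l' := next_row (a n'.+1) l in (l', next_row (last 0 l') r)
  end.

Definition oxL (a : nat -> int) n := (ox_rows a n).1.
Definition oxR (a : nat -> int) n := (ox_rows a n).2.

Definition ox_middle (a : nat -> int) (n : nat) : int :=
  if odd n then last 0 (oxR a n) else last 0 (oxL a n).
Definition ox_transform (a : nat -> int) (n : nat) : int :=
  if odd n then last 0 (oxL a n) else last 0 (oxR a n).

Definition fps := nat -> rat.
Definition fps_mul (f g : fps) : fps :=
  fun n => \sum_(i < n.+1) f i * g (n - i)%N.
Definition fps_add (f g : fps) : fps := fun n => f n + g n.
Definition fps_sub (f g : fps) : fps := fun n => f n - g n.

Definition egf (a : nat -> int) : fps := fun n => (a n)%:~R / (n`!)%:R.

Definition fps_cos : fps :=
  fun n => if odd n then 0 else (-1) ^+ (n./2) / (n`!)%:R.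
Definition fps_sin : fps :=
  fun n => if odd n then (-1) ^+ (n./2) / (n`!)%:R else 0.

(* Let m be the middle sequence and s_j, t_j the coefficients j! [x^j] of
   cos x - sin x and cos x + sin x. The row starting with a_n (L_n for even n,
   R_n for odd n) and the row starting with m_n have the closed forms
     A_{n,k} = sum_j C(n-k, j) s_j m_{n-j},   B_{n,k} = sum_j C(k, j) t_j m_{n-j}:
   since s_{j+1} = -t_j and t_{j+1} = s_j, Pascal's rule turns the ox recurrence
   into an identity between these sums. Reading off A_{n,0} = a_n and
   B_{n,n} = b_n gives the binomial convolutions a = s * m and b = t * m, i.e.
   A = (cos - sin) M and B = (cos + sin) M = (cos + sin) A / (cos - sin). *)

From mathcomp Require Import all_boot all_order all_algebra.
From mathcomp Require Import ring.
From Stdlib Require Import FunctionalExtensionality.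
Set Implicit Arguments. Unset Strict Implicit. Unset Printing Implicit Defensive.
Import Order.TTheory GRing.Theory Num.Theory.
Local Open Scope ring_scope.

Lemma nth_scanl_add (V : nmodType) (f : V) s k : (k < size s)%N ->
  nth 0 (scanl +%R f s) k = f + \sum_(i < k.+1) nth 0 s i.
Proof.
elim: s f k => [|x s IH] f [|k] //= lt_k; first by rewrite big_ord1.
by rewrite IH // [in RHS]big_ord_recl addrA.
Qed.

Lemma size_next_row f prev : size (next_row f prev) = (size prev).+1.
Proof. by rewrite /next_row /= size_scanl size_rev. Qed.

Lemma nth_next_row f prev (c : nat -> int) n :
  size prev = n.+1 -> (forall k, (k <= n)%N -> nth 0 prev k = c k) ->
  forall k, (k <= n.+1)%N ->
  nth 0 (next_row f prev) k = f + \sum_(0 <= i < k) c (n - i)%N.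
Proof.
move=> size_prev prevE [|k] le_k; first by rewrite big_geq ?addr0.
rewrite /next_row /= nth_scanl_add ?size_rev ?size_prev // big_mkord.
congr (_ + _); apply: eq_bigr => i _.
have lt_i : (i < n.+1)%N by apply: leq_trans (ltn_ord i) le_k.
by rewrite nth_rev size_prev // subSS prevE // leq_subr.
Qed.

(* [ox_rowA a n] runs from a_n to m_n, [ox_rowB a n] from m_n to b_n. *)
Definition ox_rowA a n := if odd n then oxR a n else oxL a n.
Definition ox_rowB a n := if odd n then oxL a n else oxR a n.

Lemma ox_rowAS a n : ox_rowA a n.+1 = next_row (a n.+1) (ox_rowB a n).
Proof.
by rewrite /ox_rowA /ox_rowB /oxL /oxR /=; case: (ox_rows a n) => l r; case: odd.
Qed.

Lemma ox_rowBS a n :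
  ox_rowB a n.+1 = next_row (last 0 (ox_rowA a n.+1)) (ox_rowA a n).
Proof.
by rewrite /ox_rowA /ox_rowB /oxL /oxR /=; case: (ox_rows a n) => l r; case: odd.
Qed.

Lemma ox_middleE a n : ox_middle a n = last 0 (ox_rowA a n).
Proof. by rewrite /ox_middle /ox_rowA; case: odd. Qed.

Lemma ox_transformE a n : ox_transform a n = last 0 (ox_rowB a n).
Proof. by rewrite /ox_transform /ox_rowB; case: odd. Qed.

Lemma ox_rowA_head a n : nth 0 (ox_rowA a n) 0 = a n.
Proof. by case: n => [|n] //; rewrite ox_rowAS. Qed.

Definition sgn_cos_sub_sin (j : nat) : int := (-1) ^+ (j.+1)./2.
Definition sgn_cos_add_sin (j : nat) : int := (-1) ^+ j./2.

Lemma sgn_cos_sub_sinS j : sgn_cos_sub_sin j.+1 = - sgn_cos_add_sin j.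
Proof. by rewrite /sgn_cos_sub_sin /sgn_cos_add_sin /= exprS mulN1r. Qed.

Lemma sgn_cos_add_sinS j : sgn_cos_add_sin j.+1 = sgn_cos_sub_sin j.
Proof. by []. Qed.

Definition rowA_coef (m : nat -> int) n k :=
  \sum_(j < n.+1) 'C(n - k, j)%:R * sgn_cos_sub_sin j * m (n - j)%N.
Definition rowB_coef (m : nat -> int) n k :=
  \sum_(j < n.+1) 'C(k, j)%:R * sgn_cos_add_sin j * m (n - j)%N.

Lemma rowA_coef_diag m n : rowA_coef m n n = m n.
Proof.
rewrite /rowA_coef subnn big_ord_recl big1 => [|j _]; last by rewrite bin0n !mul0r.
by rewrite bin0 subn0 mul1r addr0.
Qed.

Lemma rowB_coef0 m n : rowB_coef m n 0 = m n.
Proof.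
rewrite /rowB_coef big_ord_recl big1 => [|j _]; last by rewrite bin0n !mul0r.
by rewrite bin0 subn0 mul1r addr0.
Qed.

Lemma rowA_coefS m n k : (k <= n)%N ->
  rowA_coef m n.+1 k.+1 - rowA_coef m n.+1 k = rowB_coef m n (n - k).
Proof.
move=> le_kn; rewrite /rowA_coef /rowB_coef subSS subSn //.
rewrite [in X in X - _]big_ord_recl [in X in _ - X]big_ord_recl !bin0.
rewrite opprD addrACA subrr add0r -sumrB; apply: eq_bigr => j _.
rewrite lift0 binS sgn_cos_sub_sinS natrD /=; ring.
Qed.

Lemma rowB_coefS m n k : (k <= n)%N ->
  rowB_coef m n.+1 k.+1 - rowB_coef m n.+1 k = rowA_coef m n (n - k).
Proof.
move=> le_kn; rewrite /rowA_coef /rowB_coef subKn //.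
rewrite [in X in X - _]big_ord_recl [in X in _ - X]big_ord_recl !bin0.
rewrite opprD addrACA subrr add0r -sumrB; apply: eq_bigr => j _.
rewrite lift0 binS sgn_cos_add_sinS natrD /=; ring.
Qed.

Lemma rowA_coef_telescope m n k : (k <= n.+1)%N ->
  rowA_coef m n.+1 k = m n.+1 - \sum_(k <= i < n.+1) rowB_coef m n (n - i).
Proof.
move=> le_k; rewrite (@telescope_sumr_eq _ _ _ (rowA_coef m n.+1) _ le_k).
  by rewrite rowA_coef_diag opprB addrC subrK.
by move=> i /andP[_ lt_in]; rewrite rowA_coefS.
Qed.

Lemma rowB_coef_telescope m n k : (k <= n.+1)%N ->
  rowB_coef m n.+1 k = m n.+1 + \sum_(0 <= i < k) rowA_coef m n (n - i).
Proof.
move=> le_k; rewrite (@telescope_sumr_eq _ _ _ (rowB_coef m n.+1) _ (leq0n k)).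
  by rewrite rowB_coef0 addrC subrK.
by move=> i /andP[_ lt_ik]; rewrite rowB_coefS // -ltnS (leq_trans lt_ik).
Qed.

Definition binconv (u v : nat -> int) n :=
  \sum_(j < n.+1) 'C(n, j)%:R * u j * v (n - j)%N.

Section DoubleOxRows.

Variable a : nat -> int.
Local Notation m := (ox_middle a).

Lemma ox_rows_closed n :
  [/\ size (ox_rowA a n) = n.+1, size (ox_rowB a n) = n.+1,
      forall k, (k <= n)%N -> nth 0 (ox_rowA a n) k = rowA_coef m n k &
      forall k, (k <= n)%N -> nth 0 (ox_rowB a n) k = rowB_coef m n k].
Proof.
elim: n => [|n [sizeA sizeB rowAE rowBE]].
  by split=> // k; rewrite leqn0 => /eqP->; rewrite ?rowA_coef_diag ?rowB_coef0.
have sizeA' : size (ox_rowA a n.+1) = n.+2 by rewrite ox_rowAS size_next_row sizeB.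
have sizeB' : size (ox_rowB a n.+1) = n.+2 by rewrite ox_rowBS size_next_row sizeA.
have rowA'E := nth_next_row (a n.+1) sizeB rowBE; rewrite -ox_rowAS in rowA'E.
have rowB'E := nth_next_row (last 0 (ox_rowA a n.+1)) sizeA rowAE.
rewrite -ox_rowBS -ox_middleE in rowB'E.
have m_top : m n.+1 = a n.+1 + \sum_(0 <= i < n.+1) rowB_coef m n (n - i).
  by rewrite ox_middleE -nth_last sizeA' rowA'E.
split=> // k le_k; last by rewrite rowB'E // rowB_coef_telescope.
by rewrite rowA'E // rowA_coef_telescope // m_top (big_cat_nat (leq0n k) le_k) addrA addrK.
Qed.

Lemma ox_seq_binconv : a =1 binconv sgn_cos_sub_sin m.
Proof.
by move=> n; have [_ _ rowAE _] := ox_rows_closed n; rewrite -ox_rowA_head rowAE // /rowA_coef subn0.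
Qed.

Lemma ox_transform_binconv : ox_transform a =1 binconv sgn_cos_add_sin m.
Proof.
move=> n; have [_ sizeB _ rowBE] := ox_rows_closed n.
by rewrite ox_transformE -nth_last sizeB rowBE.
Qed.

End DoubleOxRows.

Lemma egf_ext u v : u =1 v -> egf u = egf v.
Proof. by move=> /functional_extensionality->. Qed.

Lemma egf_mul u v : fps_mul (egf u) (egf v) = egf (binconv u v).
Proof.
apply: functional_extensionality => n.
rewrite /fps_mul /egf /binconv rmorph_sum mulr_suml; apply: eq_bigr => -[i /=]; rewrite ltnS => le_in _.
rewrite -(bin_fact le_in) !rmorphM /= rmorph_nat.
have fact_neq0 j : (j`!)%:R != 0 :> rat by rewrite pnatr_eq0 -lt0n fact_gt0.
have bin_neq0 : 'C(n, i)%:R != 0 :> rat by rewrite pnatr_eq0 -lt0n bin_gt0.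
by field; rewrite !fact_neq0 bin_neq0.
Qed.

Lemma intr_sign k : ((-1) ^+ k : int)%:~R = (-1) ^+ k :> rat.
Proof. by rewrite rmorphXn rmorphN1. Qed.

Lemma fps_cos_sub_sin : fps_sub fps_cos fps_sin = egf sgn_cos_sub_sin.
Proof.
apply: functional_extensionality => n.
rewrite /fps_sub /fps_cos /fps_sin /egf /sgn_cos_sub_sin intr_sign.
rewrite -[(n.+1)./2]/(uphalf n) uphalf_half.
by case: odd; rewrite /= ?subr0 ?exprS ?sub0r ?mulN1r ?mulNr.
Qed.

Lemma fps_cos_add_sin : fps_add fps_cos fps_sin = egf sgn_cos_add_sin.
Proof.
apply: functional_extensionality => n.
rewrite /fps_add /fps_cos /fps_sin /egf /sgn_cos_add_sin intr_sign.
by case: odd; rewrite ?add0r ?addr0.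
Qed.

Definition fps_trunc N (f : fps) : {poly rat} := \poly_(i < N) f i.

Lemma fps_mul_trunc f g N n : (n < N)%N ->
  fps_mul f g n = (fps_trunc N f * fps_trunc N g)`_n.
Proof.
move=> lt_nN; rewrite coefM; apply: eq_bigr => -[i /=]; rewrite ltnS => le_in _.
by rewrite !coef_poly (leq_ltn_trans le_in) // (leq_ltn_trans (leq_subr i n)).
Qed.

Lemma fps_mulC f g : fps_mul f g = fps_mul g f.
Proof.
apply: functional_extensionality => n.
by rewrite !(fps_mul_trunc _ _ (ltnSn n)) mulrC.
Qed.

Lemma coefM_trunc (R : nzSemiRingType) (p q r : {poly R}) N n :
  (forall i, (i < N)%N -> p`_i = q`_i) -> (n < N)%N -> (r * p)`_n = (r * q)`_n.
Proof.
move=> eq_pq lt_nN; rewrite !coefM; apply: eq_bigr => i _.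
by rewrite eq_pq // (leq_ltn_trans (leq_subr i n)).
Qed.

Lemma fps_trunc_mul f g N i : (i < N)%N ->
  (fps_trunc N (fps_mul f g))`_i = (fps_trunc N f * fps_trunc N g)`_i.
Proof. by move=> lt_iN; rewrite coef_poly lt_iN (fps_mul_trunc _ _ lt_iN). Qed.

Lemma fps_mulA f g h : fps_mul f (fps_mul g h) = fps_mul (fps_mul f g) h.
Proof.
apply: functional_extensionality => n.
rewrite !(fps_mul_trunc _ _ (ltnSn n)).
rewrite (coefM_trunc _ (@fps_trunc_mul g h n.+1)) // mulrA [in RHS]mulrC.
by rewrite (coefM_trunc _ (@fps_trunc_mul f g n.+1)) // mulrC.
Qed.

Theorem theorem2 (a : nat -> int) :
  fps_mul (fps_sub fps_cos fps_sin) (egf (ox_middle a)) = egf a /\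
  fps_mul (fps_sub fps_cos fps_sin) (egf (ox_transform a))
    = fps_mul (fps_add fps_cos fps_sin) (egf a).
Proof.
have egf_a : egf a = fps_mul (fps_sub fps_cos fps_sin) (egf (ox_middle a)).
  by rewrite fps_cos_sub_sin egf_mul (egf_ext (ox_seq_binconv a)).
have egf_b : egf (ox_transform a) = fps_mul (fps_add fps_cos fps_sin) (egf (ox_middle a)).
  by rewrite fps_cos_add_sin egf_mul (egf_ext (ox_transform_binconv a)).
split; first by rewrite egf_a.
by rewrite egf_b egf_a !fps_mulA (fps_mulC (fps_sub _ _)).
Qed.
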